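(* Let $O_1,O_2$ be Hermitian operators on $\mathcal H$. Then $|\tilde\Xi_{O_1,O_2}\cdot\Xi_{O_1,O_2}|\le\|\tilde\Xi_{O_1,O_2}\|_2^2=\|\Xi_{O_1,O_2}\|_2^2$. If moreover $\rho$ is a density operator and $O$ is traceless Hermitian, then $$|\tilde\Xi_{\rho,O}\cdot\Xi_{\rho,O}|\le\|\tilde\Xi_{\rho,O}\|_2^2=\|\Xi_{\rho,O}\|_2^2\le\|\Xi_O^2\|_{[d]}\le\|\Xi_O\|_2^2=d\|O\|_2^2.$$
   Context: $n\ge1$, $d=2^n$, $\mathcal H=(\mathbb C^2)^{\otimes n}$, $\overline{\mathcal P}_n=\{I,X,Y,Z\}^{\otimes n}$. For operators $A,B$ define functions on $\overline{\mathcal P}_n$ regarded as vectors in $\mathbb R^{d^2}$ (Euclidean norm, standard inner product $\cdot$): $\Xi_A(P)=\operatorname{tr}(AP)$, $\Xi_{A,B}(P)=\operatorname{tr}(AP)\operatorname{tr}(BP)$, $\tilde\Xi_{A,B}(P)=\operatorname{tr}(APBP)$. $\|\Xi_O^2\|_{[d]}$ is the sum of the $d$ largest values of $\Xi_O(P)^2$; $\|O\|_2$ is the Hilbert–Schmidt norm. *)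

(* Scalars: an arbitrary numClosedFieldType C (e.g. complex R
   for R : realType, or algC); operators on H = (C^2)^{(x) n} are d x d
   matrices, d = 2^n, written in the computational basis. *)
From HB Require Import structures.
From mathcomp Require Import all_boot all_order all_algebra.
Set Implicit Arguments. Unset Strict Implicit. Unset Printing Implicit Defensive.
Import Order.TTheory GRing.Theory Num.Theory.
Local Open Scope ring_scope.

Section Pauli.
Variable C : numClosedFieldType.

Definition adjmx {m} (A : 'M[C]_m) : 'M[C]_m := map_mx Num.conj (A^T).

Definition hermitian_op {m} (A : 'M[C]_m) : Prop := adjmx A = A.

Definition psd {m} (A : 'M[C]_m) : Prop :=
  hermitian_op A /\ forall v : 'cV[C]_m, 0 <= (map_mx Num.conj (v^T) *m A *m v) 0 0.

Definition density_op {m} (A : 'M[C]_m) : Prop := psd A /\ \tr A = 1.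

(* single-qubit Paulis: 0 = I, 1 = X, 2 = Y, 3 = Z; entries indexed by bits *)
Definition pauli1 (a : 'I_4) (r c : bool) : C :=
  match val a with
  | 0 => if r == c then 1 else 0
  | 1 => if r == c then 0 else 1
  | 2 => if r == c then 0 else (if r then 'i else - 'i)
  | _ => if r == c then (if r then -1 else 1) else 0
  end.

Definition qbit (i k : nat) : bool := odd (i %/ 2 ^ k).

Definition pstring (n : nat) := {ffun 'I_n -> 'I_4}.

(* the matrix of the tensor product P_{s_0} (x) ... (x) P_{s_{n-1}} *)
Definition pauli_mx (n : nat) (s : pstring n) : 'M[C]_(2 ^ n) :=
  \matrix_(i, j) \prod_(k < n) pauli1 (s k) (qbit i k) (qbit j k).

Definition Xi {n} (A : 'M[C]_(2 ^ n)) (s : pstring n) : C :=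
  \tr (A *m pauli_mx s).
Definition Xi2 {n} (A B : 'M[C]_(2 ^ n)) (s : pstring n) : C :=
  Xi A s * Xi B s.
Definition Xit {n} (A B : 'M[C]_(2 ^ n)) (s : pstring n) : C :=
  \tr (A *m pauli_mx s *m B *m pauli_mx s).

Definition pdot {n} (f g : pstring n -> C) : C := \sum_s f s * g s.
Definition pnorm2 {n} (f : pstring n -> C) : C := \sum_s `|f s| ^+ 2.

Definition topsum {n} (k : nat) (f : pstring n -> C) : C :=
  \big[Num.max/0]_(S : {set pstring n} | #|S| == k) \sum_(s in S) f s.

Definition hs2 {m} (A : 'M[C]_m) : C := \sum_i \sum_j `|A i j| ^+ 2.

End Pauli.

(* Averaging over Pauli strings acts on matrix entries through the
   completeness relation sum_P P_ab P_ce = d [a = e] [b = c], which turns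
   sum_P tr(AP) tr(BP) into d tr(AB), hence ||Xi_A||^2 into d ||A||_2^2.  Its
   fourth-moment analogue, checked one qubit at a time, exchanges column
   indices in sum_P P P P P; this identifies sum_P tr(APBP)^2 with
   sum_P (tr(AP) tr(BP))^2, so for Hermitian arguments the two vectors have
   the same norm and the bound on their dot product is AM-GM.  For a state
   rho, tr(rho (I +- P)) >= 0 puts the weights tr(rho P)^2 in [0,1], and the
   2x2 minors of rho give tr(rho^2) <= 1, so the weights sum to at most d.  A
   sum of nonnegative numbers with such weights is at most the sum of the d
   largest of them. *)

From mathcomp Require Import all_boot all_order all_algebra ring.
Import Order.TTheory GRing.Theory Num.Theory.
Local Open Scope ring_scope.
Set Implicit Arguments. Unset Strict Implicit. Unset Printing Implicit Defensive.

Section SingleQubit.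
Variable C : numClosedFieldType.
Local Notation p := (pauli1 C).

Lemma pauli1_conj (a : 'I_4) (r c : bool) : (p a c r)^* = p a r c.
Proof.
rewrite /pauli1; case: a => [[|[|[|[|k]]]] ?] /=;
  by case: r; case: c; rewrite /= ?conjC0 ?conjC1 ?rmorphN /= ?conjC1 ?conjCi ?opprK.
Qed.

Lemma pauli1_sqr (a : 'I_4) (i l : bool) : \sum_(b : bool) p a i b * p a b l = (i == l)%:R.
Proof.
rewrite big_bool /pauli1; case: a => [[|[|[|[|k]]]] ?] /=;
  by case: i; case: l => /=; ring: (sqrCi C).
Qed.

Lemma sum_pauli1_entries (i j k l : bool) :
  \sum_(a < 4) p a i j * p a k l = 2%:R * ((i == l)%:R * (j == k)%:R).
Proof.
rewrite !big_ord_recl big_ord0 /pauli1 /=.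
by case: i; case: j; case: k; case: l => /=; ring: (sqrCi C).
Qed.

Lemma sum_pauli1_swap4 (b c e a b' c' e' a' : bool) :
  \sum_(x < 4) p x b c * p x e a * (p x b' c' * p x e' a')
= \sum_(x < 4) p x b a * p x e c * (p x b' a' * p x e' c').
Proof.
rewrite !big_ord_recl !big_ord0 /pauli1 /=.
by case: b; case: c; case: e; case: a; case: b'; case: c'; case: e'; case: a' => /=;
  ring: (sqrCi C).
Qed.

End SingleQubit.

Lemma qbit0 i : qbit i 0 = odd i.
Proof. by rewrite /qbit expn0 divn1. Qed.

Lemma qbitS i k : qbit i k.+1 = qbit i./2 k.
Proof. by rewrite /qbit expnS divnMA divn2. Qed.

Lemma qbit_inj n i l : (i < 2 ^ n)%N -> (l < 2 ^ n)%N ->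
  (forall k, (k < n)%N -> qbit i k = qbit l k) -> i = l.
Proof.
elim: n i l => [|n IH] i l; first by rewrite expn0 !ltnS !leqn0 => /eqP-> /eqP->.
move=> ltin ltln eq_bits.
have eq_odd : odd i = odd l by rewrite -!qbit0; apply: eq_bits.
have eq_half : i./2 = l./2.
  apply: IH; rewrite ?ltn_half_double -?mul2n -?expnS // => k ltkn.
  by rewrite -!qbitS; apply: eq_bits.
by rewrite -(odd_double_half i) -(odd_double_half l) eq_odd eq_half.
Qed.

Definition qbits n (j : 'I_(2 ^ n)) : {ffun 'I_n -> bool} := [ffun k : 'I_n => qbit j k].

Lemma qbits_inj n : injective (@qbits n).
Proof.
move=> i l /ffunP eq_bits; apply/val_inj/(qbit_inj (ltn_ord i) (ltn_ord l)).
by move=> k ltkn; have := eq_bits (Ordinal ltkn); rewrite !ffunE.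
Qed.

Lemma qbits_bij n : bijective (@qbits n).
Proof. by apply: inj_card_bij; [exact: qbits_inj | rewrite card_ffun !card_ord card_bool]. Qed.

Section BitSums.
Variable R : comPzSemiRingType.

Lemma sum_qbits n (F : 'I_n -> bool -> R) :
  \sum_(j < 2 ^ n) \prod_k F k (qbit j k) = \prod_k \sum_b F k b.
Proof.
rewrite bigA_distr_bigA (reindex (@qbits n)) /=; last exact/onW_bij/qbits_bij.
by apply: eq_bigr => j _; apply: eq_bigr => k _; rewrite ffunE.
Qed.

Lemma prod_qbit_eq n (i l : 'I_(2 ^ n)) :
  \prod_(k < n) ((qbit i k == qbit l k)%:R : R) = (i == l)%:R.
Proof.
have [->|neq_il] := eqVneq i l; first by rewrite big1 // => k _; rewrite eqxx.
have /existsP[k neq_k] : [exists k : 'I_n, qbit i k != qbit l k].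
  apply: contraNT neq_il => /existsPn eq_bits; apply/eqP/qbits_inj.
  by apply/ffunP => k; rewrite !ffunE; apply/eqP/negPn/eq_bits.
by rewrite (bigD1 k) //= (negbTE neq_k) mul0r.
Qed.

End BitSums.

Section PauliStrings.
Variables (C : numClosedFieldType) (n : nat).
Local Notation P s := (pauli_mx C s).
Local Notation I := 'I_(2 ^ n).

Lemma pauli_mxE (s : pstring n) (i j : I) :
  P s i j = \prod_k pauli1 C (s k) (qbit i k) (qbit j k).
Proof. by rewrite mxE. Qed.

Lemma adjmx_pauli (s : pstring n) : adjmx (P s) = P s.
Proof.
by apply/matrixP => i j; rewrite !mxE rmorph_prod; apply: eq_bigr => k _; exact: pauli1_conj.
Qed.

Lemma pauli_mx_sqr (s : pstring n) : P s *m P s = 1%:M.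
Proof.
apply/matrixP => i l; rewrite !mxE -prod_qbit_eq.
under eq_bigr => j _ do rewrite !pauli_mxE -big_split /=.
rewrite (sum_qbits (fun k b => pauli1 C (s k) (qbit i k) b * pauli1 C (s k) b (qbit l k))).
by apply: eq_bigr => k _; rewrite pauli1_sqr.
Qed.

Lemma sum_pauli_mx_entries (x1 x2 x3 x4 : I) :
  \sum_(s : pstring n) P s x1 x2 * P s x3 x4 =
  (2 ^ n)%:R * ((x1 == x4)%:R * (x2 == x3)%:R).
Proof.
under eq_bigr => s _ do rewrite !pauli_mxE -big_split /=.
rewrite -(bigA_distr_bigA (fun (k : 'I_n) a =>
  pauli1 C a (qbit x1 k) (qbit x2 k) * pauli1 C a (qbit x3 k) (qbit x4 k))).
under eq_bigr => k _ do rewrite sum_pauli1_entries.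
by rewrite !big_split /= !prod_qbit_eq prodr_const card_ord natrX.
Qed.

Lemma sum_pauli_mx_swap4 (b c e a b' c' e' a' : I) :
  \sum_(s : pstring n) P s b c * P s e a * (P s b' c' * P s e' a')
= \sum_(s : pstring n) P s b a * P s e c * (P s b' a' * P s e' c').
Proof.
under eq_bigr => s _ do rewrite !pauli_mxE -!big_split /=.
under [RHS]eq_bigr => s _ do rewrite !pauli_mxE -!big_split /=.
rewrite -(bigA_distr_bigA (fun (k : 'I_n) x =>
  pauli1 C x (qbit b k) (qbit c k) * pauli1 C x (qbit e k) (qbit a k) *
  (pauli1 C x (qbit b' k) (qbit c' k) * pauli1 C x (qbit e' k) (qbit a' k)))).
rewrite -(bigA_distr_bigA (fun (k : 'I_n) x =>
  pauli1 C x (qbit b k) (qbit a k) * pauli1 C x (qbit e k) (qbit c k) *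
  (pauli1 C x (qbit b' k) (qbit a' k) * pauli1 C x (qbit e' k) (qbit c' k)))).
by apply: eq_bigr => k _; rewrite sum_pauli1_swap4.
Qed.

End PauliStrings.

Lemma sum_mul_sums (R : comPzSemiRingType) (S T : finType) (al be : T -> R) (u v : S -> T -> R) :
  \sum_s (\sum_x al x * u s x) * (\sum_y be y * v s y)
  = \sum_x \sum_y al x * be y * \sum_s u s x * v s y.
Proof.
rewrite (eq_bigr (fun s => \sum_x \sum_y al x * be y * (u s x * v s y))); last first.
  move=> s _; rewrite mulr_suml; apply: eq_bigr => x _; rewrite mulr_sumr.
  by apply: eq_bigr => y _; ring.
rewrite exchange_big; apply: eq_bigr => x _.
by rewrite exchange_big; apply: eq_bigr => y _; rewrite mulr_sumr.
Qed.

Section Adjoint.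
Variables (C : numClosedFieldType) (m : nat).

Lemma conj_mxtrace (A : 'M[C]_m) : (\tr A)^* = \tr (adjmx A).
Proof. by rewrite rmorph_sum; apply: eq_bigr => i _; rewrite !mxE. Qed.

Lemma adjmxM (A B : 'M[C]_m) : adjmx (A *m B) = adjmx B *m adjmx A.
Proof. by rewrite /adjmx trmx_mul map_mxM. Qed.

End Adjoint.

Section PauliCoefficients.
Variables (C : numClosedFieldType) (n : nat).
Local Notation P s := (pauli_mx C s).
Local Notation M := 'M[C]_(2 ^ n).
Local Notation I := 'I_(2 ^ n).
Local Notation I4 := ((I * I) * (I * I))%type.

Lemma conj_Xi (A : M) s : (Xi A s)^* = Xi (adjmx A) s.
Proof. by rewrite conj_mxtrace adjmxM adjmx_pauli mxtrace_mulC. Qed.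

Lemma Xi_real (A : M) s : hermitian_op A -> (Xi A s)^* = Xi A s.
Proof. by rewrite conj_Xi => ->. Qed.

Lemma conj_Xit (A B : M) s : (Xit A B s)^* = Xit (adjmx A) (adjmx B) s.
Proof. by rewrite conj_mxtrace !adjmxM !adjmx_pauli !mulmxA mxtrace_mulC !mulmxA. Qed.

Lemma XiE (A : M) s : Xi A s = \sum_(x : I * I) A x.1 x.2 * P s x.2 x.1.
Proof.
rewrite /Xi /mxtrace -(pair_bigA _ (fun i j => A i j * P s j i)).
by apply: eq_bigr => i _; rewrite mxE.
Qed.

Lemma Xi2E (A B : M) s : Xi2 A B s =
  \sum_(x : I4) A x.1.1 x.1.2 * B x.2.1 x.2.2 * (P s x.1.2 x.1.1 * P s x.2.2 x.2.1).
Proof.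
rewrite /Xi2 !XiE mulr_suml -(pair_bigA _ (fun y z =>
  A y.1 y.2 * B z.1 z.2 * (P s y.2 y.1 * P s z.2 z.1))).
by apply: eq_bigr => y _; rewrite mulr_sumr; apply: eq_bigr => z _; ring.
Qed.

Lemma XitE (A B : M) s : Xit A B s =
  \sum_(x : I4) A x.1.1 x.1.2 * B x.2.1 x.2.2 * (P s x.1.2 x.2.1 * P s x.2.2 x.1.1).
Proof.
rewrite /Xit /mxtrace -(pair_bigA _ (fun y z =>
  A y.1 y.2 * B z.1 z.2 * (P s y.2 z.1 * P s z.2 y.1))).
rewrite -(pair_bigA _ (fun a b => \sum_z A a b * B z.1 z.2 * (P s b z.1 * P s z.2 a))).
apply: eq_bigr => a _; rewrite mxE.
rewrite (eq_bigr (fun e => \sum_c \sum_b A a b * P s b c * B c e * P s e a)); last first.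
  by move=> e _; rewrite mxE mulr_suml; apply: eq_bigr => c _; rewrite mxE !mulr_suml.
rewrite exchange_big.
rewrite (eq_bigr (fun c => \sum_b \sum_e A a b * P s b c * B c e * P s e a)); last first.
  by move=> c _; rewrite exchange_big.
rewrite exchange_big; apply: eq_bigr => b _.
by rewrite pair_bigA; apply: eq_bigr => z _; ring.
Qed.

Lemma sum_Xi_mul (A B : M) : \sum_s Xi A s * Xi B s = (2 ^ n)%:R * \tr (A *m B).
Proof.
under eq_bigr => s _ do rewrite !XiE.
rewrite (sum_mul_sums (fun x : I * I => A x.1 x.2) (fun x : I * I => B x.1 x.2)).
under eq_bigr => x _ do under eq_bigr => y _ do rewrite sum_pauli_mx_entries.
rewrite /mxtrace (eq_bigr (fun i => \sum_j A i j * B j i)) => [|i _]; last by rewrite mxE.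
rewrite [in RHS]pair_bigA mulr_sumr; apply: eq_bigr => [[i j]] _ /=.
rewrite (bigD1 (j, i)) //= !eqxx big1 ?addr0 => [|[k l] /=]; first by rewrite !mulr1 mulrC.
move=> neq; case: eqP => [ejk|_]; last by rewrite mul0r !mulr0.
case: eqP => [eil|_]; last by rewrite !mulr0.
by rewrite ejk eil eqxx in neq.
Qed.

Lemma sum_Xit_sqr (A B : M) :
  \sum_s Xit A B s * Xit A B s = \sum_s Xi2 A B s * Xi2 A B s.
Proof.
under eq_bigr => s _ do rewrite XitE.
under [RHS]eq_bigr => s _ do rewrite Xi2E.
rewrite !(sum_mul_sums (fun x : I4 => A x.1.1 x.1.2 * B x.2.1 x.2.2)
                       (fun x : I4 => A x.1.1 x.1.2 * B x.2.1 x.2.2)).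
by apply: eq_bigr => x _; apply: eq_bigr => y _; rewrite sum_pauli_mx_swap4.
Qed.

End PauliCoefficients.

Section PauliNorms.
Variables (C : numClosedFieldType) (n : nat).

Lemma pnorm2_real (f : pstring n -> C) :
  (forall s, (f s)^* = f s) -> pnorm2 f = \sum_s f s * f s.
Proof. by move=> f_real; apply: eq_bigr => s _; rewrite normCK f_real. Qed.

Lemma pnorm2_Xi (A : 'M[C]_(2 ^ n)) : pnorm2 (Xi A) = (2 ^ n)%:R * hs2 A.
Proof.
rewrite /pnorm2; under eq_bigr => s _ do rewrite normCK conj_Xi.
rewrite sum_Xi_mul; congr (_ * _); apply: eq_bigr => i _.
by rewrite mxE; apply: eq_bigr => j _; rewrite !mxE normCK.
Qed.

Lemma normr_pdot_le (f g : pstring n -> C) : pnorm2 f = pnorm2 g ->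
  `|pdot f g| <= pnorm2 f.
Proof.
move=> eq_norms; rewrite -(ler_pMn2r (ltn0Sn 1)).
apply: le_trans (_ : (\sum_s `|f s * g s|) *+ 2 <= _).
  by rewrite ler_pMn2r //; apply: ler_norm_sum.
rewrite -sumrMnl mulr2n {2}eq_norms -big_split /=.
apply: ler_sum => s _; rewrite normrM.
exact: (real_leif_mean_square_scaled (normr_real _) (normr_real _)).1.
Qed.

End PauliNorms.

Lemma sumr_delta (R : pzSemiRingType) (T : finType) (i : T) (F : T -> R) :
  \sum_l (l == i)%:R * F l = F i.
Proof. by rewrite (bigD1 i) //= eqxx mul1r big1 ?addr0 // => l /negPf->; rewrite mul0r. Qed.

Section PositiveSemidefinite.
Variables (C : numClosedFieldType) (m : nat).
Implicit Types (rho A : 'M[C]_m).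

Lemma psd_mxtrace_ge0 rho A : psd rho -> 0 <= \tr (adjmx A *m rho *m A).
Proof.
case=> _ rho_ge0; apply: sumr_ge0 => j _.
suff -> : (adjmx A *m rho *m A) j j =
          (map_mx Num.conj ((col j A)^T) *m rho *m col j A) 0 0 by [].
rewrite !mxE; apply: eq_bigr => k _; rewrite !mxE; congr (_ * _).
by apply: eq_bigr => l _; rewrite !mxE.
Qed.

Lemma psd_form2 rho i j (a b : C) : psd rho ->
  0 <= a^* * a * rho i i + a^* * b * rho i j + b^* * a * rho j i + b^* * b * rho j j.
Proof.
case=> _ /(_ (\col_l ((l == i)%:R * a + (l == j)%:R * b))).
congr (_ <= _); rewrite !mxE.
rewrite (eq_bigr (fun k => (k == i)%:R * (a * (a^* * rho i k + b^* * rho j k)) +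
                           (k == j)%:R * (b * (a^* * rho i k + b^* * rho j k)))) => [|k _].
  by rewrite big_split /= !sumr_delta; ring.
rewrite !mxE (eq_bigr (fun l =>
  (l == i)%:R * (a^* * rho l k) + (l == j)%:R * (b^* * rho l k))) => [|l _].
  by rewrite big_split /= !sumr_delta; ring.
by rewrite !mxE rmorphD !rmorphM /= !rmorph_nat; ring.
Qed.

Lemma psd_offdiag_le rho i j : psd rho -> `|rho i j| ^+ 2 <= rho i i * rho j j.
Proof.
move=> psd_rho; have form a b := psd_form2 i j a b psd_rho.
have rho_ji : rho j i = (rho i j)^* by rewrite -{1}psd_rho.1 !mxE.
have x_ge0 : 0 <= rho i i by have := form 1 0; rewrite conjC1 conjC0 !mul1r !mul0r !addr0.
have y_ge0 : 0 <= rho j j by have := form 0 1; rewrite conjC1 conjC0 !mul1r !mul0r !add0r.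
have x_real : (rho i i)^* = rho i i by apply/CrealP/ger0_real.
have y_real : (rho j j)^* = rho j j by apply/CrealP/ger0_real.
move: form; rewrite normCK rho_ji.
move: (rho i i) (rho j j) (rho i j) x_ge0 y_ge0 x_real y_real.
move=> x y z x_ge0 y_ge0 x_real y_real form.
have [y0|y_gt0] := eqVneq y 0; last first.
  have := form y (- z^*); rewrite y_real rmorphN /= conjCK.
  have -> : y * y * x + y * - z^* * z + - z * y * z^* + - z * - z^* * y =
            y * (x * y - z * z^*) by ring.
  by rewrite pmulr_rge0 ?lt0r ?y_gt0 // subr_ge0 mulrC.
pose w := z * z^*; have w_real : w^* = w by rewrite /w rmorphM /= conjCK mulrC.
have := form w (- (x + 1) * z^*).
rewrite w_real rmorphM rmorphN rmorphD /= x_real conjC1 conjCK y0.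
have -> : w * w * x + w * (- (x + 1) * z^*) * z + - (x + 1) * z * w * z^* +
   - (x + 1) * z * (- (x + 1) * z^*) * 0 = - (w * w * (x + 2%:R)) by rewrite /w; ring.
rewrite oppr_ge0 mulr0 => le_w0.
have x2_gt0 : 0 < x + 2%:R by rewrite ltr_wpDl.
rewrite -/w; move: le_w0; rewrite pmulr_lle0 // -expr2 real_exprn_even_le0 //=.
  by move=> /eqP ->.
by apply/CrealP; rewrite w_real.
Qed.

Lemma hs2_density_le1 rho : density_op rho -> hs2 rho <= 1.
Proof.
case=> psd_rho tr1; apply: le_trans (_ : \sum_i \sum_j rho i i * rho j j <= _).
  by apply: ler_sum => i _; apply: ler_sum => j _; apply: psd_offdiag_le.
by rewrite -big_distrlr /= -[\sum_i rho i i]/(\tr rho) tr1 mulr1.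
Qed.

End PositiveSemidefinite.

Section DensityPauli.
Variables (C : numClosedFieldType) (n : nat).
Implicit Types (rho : 'M[C]_(2 ^ n)) (s : pstring n).

Lemma density_Xi_ge rho s (c : C) : density_op rho -> c^* = c -> c * c = 1 ->
  0 <= 1 + c * Xi rho s.
Proof.
move=> [psd_rho tr1] c_real cc1; pose Q := 1%:M + c *: pauli_mx C s.
have adjQ : adjmx Q = Q.
  apply/matrixP => i j; rewrite /Q -[in RHS](adjmx_pauli C s) !mxE.
  by rewrite rmorphD rmorphM /= rmorphMn /= conjC1 eq_sym c_real.
have QQ : Q *m Q = 2%:R *: Q.
  rewrite /Q mulmxDl !mulmxDr -!scalemxAl -!scalemxAr !mul1mx !mulmx1 scalerA cc1.
  by rewrite scale1r pauli_mx_sqr scaler_nat mulr2n [c *: _ + 1%:M]addrC addrA.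
have := psd_mxtrace_ge0 Q psd_rho.
rewrite adjQ mxtrace_mulC mulmxA QQ mxtrace_mulC -scalemxAr mxtraceZ.
rewrite /Q mulmxDr mulmx1 -scalemxAr mxtraceD mxtraceZ tr1.
by rewrite pmulr_rge0 // ltr0n.
Qed.

Lemma density_normr_Xi_le1 rho s : density_op rho -> `|Xi rho s| ^+ 2 <= 1.
Proof.
move=> dens; have Xi_rho_real : Xi rho s \is Num.real by apply/CrealP/Xi_real/dens.1.1.
have Xi_ge := density_Xi_ge s dens.
rewrite real_normK // -subr_ge0.
have -> : 1 - Xi rho s ^+ 2 = (1 + 1 * Xi rho s) * (1 + -1 * Xi rho s) by ring.
by apply: mulr_ge0; apply: Xi_ge; rewrite ?conjC1 ?conjCN1 ?mulrNN ?mulr1.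
Qed.

Lemma density_pnorm2_Xi_le rho : density_op rho -> pnorm2 (Xi rho) <= (2 ^ n)%:R.
Proof.
by move=> dens; rewrite pnorm2_Xi ler_piMr ?ler0n ?hs2_density_le1.
Qed.

End DensityPauli.

Section TopSums.
Variable R : numDomainType.

Lemma le_bigmax_real (I : eqType) (r : seq I) (P : pred I) (F : I -> R) x0 j :
  x0 \is Num.real -> {in P, forall i, F i \is Num.real} -> j \in r -> P j ->
  F j <= \big[Num.max/x0]_(i <- r | P i) F i.
Proof.
move=> x0_real F_real; elim: r => //= a r IH; rewrite inE big_cons => /orP[/eqP->|jr] Pj.
  rewrite Pj comparable_le_max ?lexx //.
  by apply: real_comparable; [exact: F_real | exact: bigmax_real].
case: ifP => Pa; last exact: IH.
rewrite comparable_le_max ?IH ?orbT //.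
by apply: real_comparable; [exact: F_real | exact: bigmax_real].
Qed.

Lemma exists_set_card (T : finType) k : (k <= #|T|)%N -> exists S : {set T}, #|S| = k.
Proof.
move=> le_kT; have /card_gt0P[S] : (0 < #|[set S : {set T} | #|S| == k]|)%N.
  by rewrite card_draws bin_gt0.
by rewrite inE => /eqP; exists S.
Qed.

Lemma sum_weighted_le_sum_set (T : finType) k (w x : T -> R) :
  (forall t, 0 <= w t <= 1) -> \sum_t w t <= k%:R -> (forall t, 0 <= x t) ->
  (k <= #|T|)%N -> exists2 S : {set T}, #|S| = k & \sum_t w t * x t <= \sum_(t in S) x t.
Proof.
move=> w01 sum_w x_ge0 le_kT; have [S0 /eqP S0k] := exists_set_card le_kT.
have sum_real (S : {set T}) : \sum_(t in S) x t \is Num.real.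
  by apply/ger0_real/sumr_ge0 => t _; apply: x_ge0.
have [S /eqP Sk S_max] := @extremum_inP _ _ (>=%R) S0 (fun S : {set T} => #|S| == k)
  (fun S => \sum_(t in S) x t) (fun _ _ => lexx _)
  (fun _ _ _ _ _ _ le_yx le_zy => le_trans le_zy le_yx)
  (fun S1 S2 _ _ => real_leVge (sum_real S2) (sum_real S1)) S0k.
exists S => //.
have exchange s t : s \in S -> t \notin S -> x t <= x s.
  move=> sS tS; have tS' : t \notin S :\ s by rewrite in_setD1 (negPf tS) andbF.
  have := S_max (t |: (S :\ s)); rewrite cardsU1 tS' -Sk (cardsD1 s S) sS eqxx => /(_ isT).
  by rewrite big_setU1 //= (big_setD1 _ sS) /= lerD2r.
pose tau := \big[Num.max/0]_(t | t \notin S) x t.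
have tau_ge t : t \notin S -> x t <= tau.
  rewrite /tau; apply: (@le_bigmax_real T); rewrite ?mem_index_enum // => u _.
  exact/ger0_real.
have tau_le s : s \in S -> tau <= x s.
  by move=> sS; apply: bigmax_le => [|u]; [apply: x_ge0 | apply: exchange].
have tau_ge0 : 0 <= tau.
  rewrite /tau; elim/big_ind: _ => [//|a b a_ge0 b_ge0|u _]; last exact: x_ge0.
  by rewrite comparable_le_max ?a_ge0 // real_comparable ?ger0_real.
have splitS (F : T -> R) : \sum_t F t = \sum_(t in S) F t + \sum_(t | t \notin S) F t.
  exact: bigID.
have mass : \sum_(t | t \notin S) w t <= \sum_(t in S) (1 - w t).
  by rewrite sumrB sumr_const Sk lerBrDl -splitS.
have -> : \sum_(t in S) x t = \sum_(t in S) w t * x t + \sum_(t in S) (1 - w t) * x t.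
  by rewrite -big_split; apply: eq_bigr => t _ /=; rewrite -mulrDl addrC subrK mul1r.
rewrite splitS lerD2l.
apply: le_trans (_ : \sum_(t | t \notin S) w t * tau <= _).
  by apply: ler_sum => t tS; rewrite ler_wpM2l ?tau_ge //; case/andP: (w01 t).
apply: le_trans (_ : \sum_(t in S) (1 - w t) * tau <= _).
  by rewrite -!mulr_suml ler_wpM2r.
by apply: ler_sum => t tS; rewrite ler_wpM2l ?tau_le // subr_ge0; case/andP: (w01 t).
Qed.

End TopSums.

Section PauliSpectrum.
Variables (C : numClosedFieldType) (n : nat).
Implicit Types (f : pstring n -> C) (A B rho O : 'M[C]_(2 ^ n)).

Lemma le_topsum k f (S : {set pstring n}) :
  (forall s, 0 <= f s) -> #|S| = k -> \sum_(s in S) f s <= topsum k f.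
Proof.
move=> f_ge0 /eqP Sk; apply: le_bigmax_real; rewrite ?mem_index_enum // => T _.
by apply/ger0_real/sumr_ge0.
Qed.

Lemma topsum_le_sum k f : (forall s, 0 <= f s) -> topsum k f <= \sum_s f s.
Proof.
move=> f_ge0; apply: bigmax_le => [|S _]; first exact: sumr_ge0.
by rewrite [leRHS](bigID (mem S)) /= lerDl sumr_ge0.
Qed.

Lemma hermitian_Xit_Xi2 A B : hermitian_op A -> hermitian_op B ->
  `|pdot (Xit A B) (Xi2 A B)| <= pnorm2 (Xit A B) /\ pnorm2 (Xit A B) = pnorm2 (Xi2 A B).
Proof.
move=> hA hB; have norm_eq : pnorm2 (Xit A B) = pnorm2 (Xi2 A B).
  rewrite !pnorm2_real ?sum_Xit_sqr // => s; first by rewrite rmorphM /= !Xi_real.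
  by rewrite conj_Xit hA hB.
by split; first exact: normr_pdot_le.
Qed.

Lemma pnorm2_Xi2_le_topsum rho O : density_op rho -> hermitian_op O ->
  pnorm2 (Xi2 rho O) <= topsum (2 ^ n) (fun s => Xi O s ^+ 2).
Proof.
move=> dens hO; have sqr_ge0 s : 0 <= Xi O s ^+ 2 by rewrite -realEsqr; apply/CrealP/Xi_real.
have [||S /(le_topsum sqr_ge0) topsum_ge le_sum] := @sum_weighted_le_sum_set _ _ (2 ^ n)
    (fun s => `|Xi rho s| ^+ 2) (fun s => Xi O s ^+ 2) _ (density_pnorm2_Xi_le dens) sqr_ge0.
- by move=> s; rewrite density_normr_Xi_le1 // andbT exprn_ge0.
- by rewrite card_ffun !card_ord -[4%N]/(2 * 2)%N expnMn leq_pmulr ?expn_gt0.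
suff -> : pnorm2 (Xi2 rho O) = \sum_s `|Xi rho s| ^+ 2 * Xi O s ^+ 2.
  exact: le_trans le_sum _.
apply: eq_bigr => s _; rewrite normrM exprMn (@real_normK _ (Xi O s)) //.
exact/CrealP/Xi_real.
Qed.

End PauliSpectrum.

Theorem mainTheorem17 (C : numClosedFieldType) (n : nat) (hn : (0 < n)%N) :
  (forall O1 O2 : 'M[C]_(2 ^ n), hermitian_op O1 -> hermitian_op O2 ->
     `|pdot (Xit O1 O2) (Xi2 O1 O2)| <= pnorm2 (Xit O1 O2) /\
     pnorm2 (Xit O1 O2) = pnorm2 (Xi2 O1 O2)) /\
  (forall rho O : 'M[C]_(2 ^ n), density_op rho -> hermitian_op O -> \tr O = 0 ->
     [/\ `|pdot (Xit rho O) (Xi2 rho O)| <= pnorm2 (Xit rho O),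
         pnorm2 (Xit rho O) = pnorm2 (Xi2 rho O),
         pnorm2 (Xi2 rho O) <= topsum (2 ^ n) (fun s => Xi O s ^+ 2),
         topsum (2 ^ n) (fun s => Xi O s ^+ 2) <= pnorm2 (Xi O)
       & pnorm2 (Xi O) = (2 ^ n)%:R * hs2 O]).
Proof.
split=> [O1 O2|rho O dens hO _]; first exact: hermitian_Xit_Xi2.
have [dot_le norm_eq] := hermitian_Xit_Xi2 dens.1.1 hO.
have pnorm2_XiO : pnorm2 (Xi O) = \sum_s Xi O s ^+ 2.
  by rewrite pnorm2_real => [|s]; [apply: eq_bigr => s _; rewrite expr2 | exact: Xi_real].
split=> //; first exact: pnorm2_Xi2_le_topsum.
  by rewrite pnorm2_XiO; apply: topsum_le_sum => s; rewrite -realEsqr; apply/CrealP/Xi_real.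
exact: pnorm2_Xi.
Qed.
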